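(* In the setting described in the context, let $\{\alpha_n\}$ be a sequence of random variables with $\alpha_n\xrightarrow{P}\alpha>0$ as $n\to\infty$. Suppose C(iii), C(v), (W) and (U) hold. Then $$\int\mathbf{y}\,I(\mathbf{y}\in D_n(\alpha_n\mid\mathbf{x}))\,\mu_n(d\mathbf{y}\mid\mathbf{x})\xrightarrow{P}\int\mathbf{y}\,I(\mathbf{y}\in D(\alpha\mid\mathbf{x}))\,\mu(d\mathbf{y}\mid\mathbf{x})\quad\text{as }n\to\infty.$$
   Context: Setting: $\mathbf{Y}$ is a random vector in $\mathbb{R}^p$ and $\mathbf{X}$ a random element of a complete separable metric space $\mathcal{C}$; $(\mathbf{X}_i,\mathbf{Y}_i)$ are i.i.d. copies; $\mu(\cdot\mid\mathbf{x})$ is the conditional distribution of $\mathbf{Y}$ given $\mathbf{X}=\mathbf{x}$ for a fixed $\mathbf{x}$, and $\mu_n(B\mid\mathbf{x})=\sum_{i=1}^nI(\mathbf{Y}_i\in B)W_{i,n}(\mathbf{x})$ with nonnegative weights summing to $1$ that are measurable functions of $\mathbf{X}_1,\dots,\mathbf{X}_n$. $\rho(\cdot\mid\mathbf{x})$ is a uniformly bounded conditional depth function associated with $\mu(\cdot\mid\mathbf{x})$, $\rho_n(\cdot\mid\mathbf{x})$ its sample version defined from $\mu_n(\cdot\mid\mathbf{x})$; $D(\alpha\mid\mathbf{x})=\{\mathbf{y}:\rho(\mathbf{y}\mid\mathbf{x})\ge\alpha\}$, $D_n(\alpha\mid\mathbf{x})=\{\mathbf{y}:\rho_n(\mathbf{y}\mid\mathbf{x})\ge\alpha\}$.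 Conditions: (W) $\mu_n(\cdot\mid\mathbf{x})\to\mu(\cdot\mid\mathbf{x})$ weakly almost surely. (U) $\sup_{\mathbf{y}}|\rho_n(\mathbf{y}\mid\mathbf{x})-\rho(\mathbf{y}\mid\mathbf{x})|\xrightarrow{P}0$. C(iii): $\mu(\{\mathbf{y}:\rho(\mathbf{y}\mid\mathbf{x})=\alpha\}\mid\mathbf{x})=0$ for all $\alpha$. C(v): $\rho(\cdot\mid\mathbf{x})$ is continuous and $\rho(\mathbf{y}\mid\mathbf{x})\to0$ as $\|\mathbf{y}\|\to\infty$. *)

From HB Require Import structures.
From mathcomp Require Import all_boot all_order all_algebra.
From mathcomp Require Import all_classical all_reals all_analysis.
Set Implicit Arguments. Unset Strict Implicit. Unset Printing Implicit Defensive.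
Import Order.TTheory GRing.Theory Num.Theory.
Import numFieldNormedType.Exports.
Local Open Scope classical_set_scope.
Local Open Scope ring_scope.

(* R^p, written as row vectors 'rV[R]_p, equipped with its Borel sigma-algebra
   (sigma-algebra generated by the open sets of the product topology). *)
Definition Rp (R : realType) (p : nat) :=
  g_sigma_algebraType (@open 'rV[R]_p).

(* A family of events E_n is asymptotically negligible in (outer) probability:
   P^*(E_n) -> 0, i.e. for every delta > 0, eventually E_n is contained in
   a measurable set of probability at most delta. *)
Definition outer_prob_to0 {d} {Omega : measurableType d} {R : realType}
  (P : probability Omega R) (E : nat -> set Omega) : Prop :=
  forall delta : R, 0 < delta -> exists N : nat, forall n : nat, (N <= n)%N ->
    exists A : set Omega, measurable A /\ E n `<=` A /\ (P A <= delta%:E)%E.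

Definition cvg_in_prob {d} {Omega : measurableType d} {R : realType}
  {V : normedModType R} (P : probability Omega R)
  (Z : nat -> Omega -> V) (Z0 : Omega -> V) : Prop :=
  forall e : R, 0 < e ->
    outer_prob_to0 P (fun n => [set w | e < `|Z n w - Z0 w|]).

(* integral of f w.r.t. the weighted empirical measure
   mu_n(. | x)(w) = sum_{i<n} W_{i,n}(x)(w) delta_{Y_i(w)} *)
Definition emp_int {Omega : Type} {R : realType} {p : nat}
  (W : nat -> nat -> Omega -> R) (Y : nat -> Omega -> 'rV[R]_p)
  (n : nat) (w : Omega) (f : 'rV[R]_p -> R) : R :=
  \sum_(i < n) W n i w * f (Y i w).

From HB Require Import structures.
From mathcomp Require Import all_boot all_order all_algebra.
From mathcomp Require Import all_classical all_reals all_analysis.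
From mathcomp Require Import lra ring.
Import Order.TTheory GRing.Theory Num.Theory.
Import numFieldNormedType.Exports.
Local Open Scope classical_set_scope.
Local Open Scope ring_scope.

(* Replace the indicator of [{alpha <= rho}] by the continuous [ramp alpha eps]
   of [rho], which differs from it only on the shell [|rho - alpha| <= 2 eps].
   When [sup |rho_n - rho| <= eps] and [|alpha_n - alpha| <= eps], the sample
   indicator [1{alpha_n <= rho_n}] also differs from the ramp only there, so each
   coordinate error is dominated by [K * tent(rho y)], where by C(v) [K] bounds
   [|y|] on [{rho >= alpha / 4}], and the continuous [tent] is 1 on the shell and
   vanishes off [|rho - alpha| < 3 eps].  The functions [y_j * ramp(rho y)] and
   [tent(rho y)] are bounded and continuous, so by (W) their empirical means
   converge almost surely, hence in probability; by C(iii) the [mu]-mass of the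
   shell, and with it the limit of the tent means, is as small as we wish; (U)
   and [alpha_n -> alpha] take care of the remaining events. *)

Section mx_norm_coord.
Context {R : realDomainType} {m n : nat}.

Lemma normr_coord_le (y : 'M[R]_(m, n)) i j : `|y i j| <= `|y|.
Proof.
have -> : `|y| = mx_norm y by [].
rewrite mx_normrE.
exact: (le_bigmax _ (fun ij : 'I_m * 'I_n => `|y ij.1 ij.2|) (i, j)).
Qed.

Lemma normr_mx_le (y : 'M[R]_(m, n)) e :
  0 <= e -> (forall i j, `|y i j| <= e) -> `|y| <= e.
Proof.
move=> e_ge0 ye; have -> : `|y| = mx_norm y by [].
rewrite mx_normrE.
by apply: bigmax_le => // -[i j] _; exact: ye.
Qed.

End mx_norm_coord.

Lemma superlevel_bounded {R : realType} {V : normedModType R} {f : V -> R} :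
  (forall e, 0 < e -> exists M : R, forall y, M < `|y| -> `|f y| < e) ->
  forall b, 0 < b -> exists K, 0 <= K /\ forall y, b <= f y -> `|y| <= K.
Proof.
move=> f_vanish b b_gt0; have [M fM] := f_vanish b b_gt0.
exists `|M|; split => // y b_le; rewrite leNgt; apply/negP => My.
have := fM y (le_lt_trans (ler_norm M) My).
by rewrite ltNge (le_trans b_le (ler_norm _)).
Qed.

Lemma continuous_open_measurable {R : realType} {T : ptopologicalType}
    {f : T -> R} :
  continuous f -> measurable_fun (setT : set (g_sigma_algebraType (@open T))) f.
Proof.
move=> /continuousP f_cont.
apply: (measurability _ (measurable_realfun.RGenOpens.measurableE R)).
move=> _ [_ [a [b ->] <-]]; rewrite setTI.
by apply: sub_sigma_algebra; apply: f_cont; exact: interval_open.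
Qed.

Section level_sets.
Context {d : measure_display} {T : measurableType d} {R : realType}.
Context {f : T -> R} {r : R}.
Hypothesis mf : measurable_fun setT f.

Lemma measurable_set_le : measurable [set x | f x <= r].
Proof.
rewrite -[X in measurable X]setTI -preimage_itvNyc.
exact: mf measurableT _ (measurable_itv _).
Qed.

Lemma measurable_set_ge : measurable [set x | r <= f x].
Proof.
rewrite -[X in measurable X]setTI -preimage_itvcy.
exact: mf measurableT _ (measurable_itv _).
Qed.

Lemma measurable_set_gt : measurable [set x | r < f x].
Proof.
rewrite -[X in measurable X]setTI -preimage_itvoy.
exact: mf measurableT _ (measurable_itv _).
Qed.

End level_sets.

Section probability_facts.
Context {d : measure_display} {T : measurableType d} {R : realType}.
Variable P : probability T R.

Lemma nonincreasing_prob_small {B : nat -> set T} :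
  (forall n, measurable (B n)) -> nonincreasing_seq B ->
  P.-negligible (\bigcap_n B n) ->
  forall eta : R, 0 < eta -> exists n, (P (B n) <= eta%:E)%E.
Proof.
move=> mB B_dec [N [mN PN0 capN]] eta eta_gt0.
have mcap : measurable (\bigcap_n B n).
  by apply: bigcap_measurable => *; [exists 0%N | exact: mB].
have P_cap0 : P (\bigcap_n B n) = 0%E.
  by apply/eqP; rewrite eq_le measure_ge0 andbT -PN0 le_measure // inE.
have B0_fin : (P (B 0%N) < +oo)%E.
  exact: le_lt_trans (probability_le1 P (mB 0%N)) (ltry _).
have /fine_cvgP[PB_fin PB_cvg] : (P \o B) n @[n --> \oo] --> 0%E.
  by rewrite -P_cap0; exact: nonincreasing_cvg_mu.
have [n _ Hn] := filterI PB_fin (cvgr_dist_lt _ _ PB_cvg _ eta_gt0).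
have [/= PBn_fin] := Hn n (leqnn n); rewrite sub0r normrN => PBn_lt.
by exists n; rewrite -(fineK PBn_fin) lee_fin (le_trans (ler_norm _)) ?ltW.
Qed.

Lemma level_shell_small {f : T -> R} :
  measurable_fun setT f -> (forall a, P [set x | f x = a] = 0%E) ->
  forall (a eta : R), 0 < eta ->
    exists r, 0 < r /\ (P [set x | (`|f x - a| <= r)%R] <= eta%:E)%E.
Proof.
move=> mf level_null a eta eta_gt0.
have mdist : measurable_fun setT (fun x => `|f x - a|).
  apply: measurableT_comp (@measurable_realfun.normr_measurable R setT) _.
  exact: measurable_realfun.measurable_funB.
pose S (m : nat) := [set x | `|f x - a| <= m.+1%:R^-1].
have mS m : measurable (S m) by exact: measurable_set_le.
have S_dec : nonincreasing_seq S.
  apply/nonincreasing_seqP => m; apply/subsetPset => x /= /le_trans; apply.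
  by rewrite lef_pV2 ?posrE // ler_nat.
have S_null : P.-negligible (\bigcap_m S m).
  exists [set x | f x = a]; split => //.
    rewrite (_ : [set x | f x = a] = f @^-1` [set a]) // -[X in measurable X]setTI.
    exact: mf.
  move=> x Sx /=; apply/eqP; apply/negPn/negP => fx_neq.
  have dist_gt0 : 0 < `|f x - a| by rewrite normr_gt0 subr_eq0.
  have [m _ Hm] := near_infty_natSinv_lt (PosNum dist_gt0).
  by have := lt_le_trans (Hm m (leqnn m)) (Sx m I); rewrite ltxx.
have [m Sm] := nonincreasing_prob_small mS S_dec S_null _ eta_gt0.
by exists m.+1%:R^-1; rewrite invr_gt0.
Qed.

Lemma ae_cvg_in_prob {Z : nat -> T -> R} {Z0 : T -> R} :
  (forall n, measurable_fun setT (Z n)) -> measurable_fun setT Z0 ->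
  {ae P, forall w, Z ^~ w @ \oo --> Z0 w} -> cvg_in_prob P Z Z0.
Proof.
move=> mZ mZ0 Z_cvg e e_gt0 delta delta_gt0.
pose E k := [set w | e < `|Z k w - Z0 w|].
have mE k : measurable (E k).
  apply: measurable_set_gt.
  apply: measurableT_comp (@measurable_realfun.normr_measurable R setT) _.
  exact: measurable_realfun.measurable_funB.
pose B N := \bigcup_(k in [set k | (N <= k)%N]) E k.
have mB N : measurable (B N) by apply: bigcup_measurable => k _; exact: mE.
have B_dec : nonincreasing_seq B.
  apply/nonincreasing_seqP => N; apply/subsetPset => w [k /= Nk Ek].
  by exists k => //; exact: ltnW.
have B_null : P.-negligible (\bigcap_N B N).
  apply: negligibleS Z_cvg => w Bw /= Zw.
  have [N _ HN] := cvgr_dist_lt _ _ Zw _ e_gt0.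
  have [k /= Nk Ek] := Bw N I.
  by have := HN k Nk; rewrite distrC ltNge (ltW Ek).
have [N PBN] := nonincreasing_prob_small mB B_dec B_null _ delta_gt0.
by exists N => n Nn; exists (B N); split; [exact: mB | split => // w Ew; exists n].
Qed.

Lemma outer_prob_to0_sub {E F : nat -> set T} :
  (forall n, E n `<=` F n) -> outer_prob_to0 P F -> outer_prob_to0 P E.
Proof.
move=> EF F0 delta /F0[N HN]; exists N => n /HN[A [mA [FA PA]]].
by exists A; split; [|split; [exact: subset_trans (EF n) FA|]].
Qed.

Lemma outer_prob_to0U {E F : nat -> set T} :
  outer_prob_to0 P E -> outer_prob_to0 P F ->
  outer_prob_to0 P (fun n => E n `|` F n).
Proof.
move=> E0 F0 delta delta_gt0.
have delta2_gt0 : 0 < delta / 2 by rewrite divr_gt0.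
have [N1 HN1] := E0 _ delta2_gt0; have [N2 HN2] := F0 _ delta2_gt0.
exists (maxn N1 N2) => n; rewrite geq_max => /andP[/HN1 + /HN2].
move=> [A [mA [EA PA]]] [B [mB [FB PB]]].
exists (A `|` B); split; first exact: measurableU.
split; first exact: setUSS.
apply: le_trans (measureU2 _ mA mB) _.
by apply: le_trans (leeD PA PB) _; rewrite -EFinD lee_fin; lra.
Qed.

End probability_facts.

Section cutoffs.
Context {R : realType}.

Definition clamp01 (t : R) := Num.min 1 (Num.max 0 t).

Lemma clamp01_ge0 t : 0 <= clamp01 t.
Proof. rewrite /clamp01 !(maxEle, minEle); repeat case: ifP; lra. Qed.

Lemma clamp01_le1 t : clamp01 t <= 1.
Proof. rewrite /clamp01 !(maxEle, minEle); repeat case: ifP; lra. Qed.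

Lemma clamp01_eq1 t : 1 <= t -> clamp01 t = 1.
Proof. rewrite /clamp01 !(maxEle, minEle); repeat case: ifP; lra. Qed.

Lemma clamp01_eq0 t : t <= 0 -> clamp01 t = 0.
Proof. rewrite /clamp01 !(maxEle, minEle); repeat case: ifP; lra. Qed.

Lemma continuous_clamp01 : continuous clamp01.
Proof.
apply: min_fun_continuous; first exact: cst_continuous.
by apply: max_fun_continuous; [exact: cst_continuous | move=> t; exact: cvg_id].
Qed.

Definition ramp (a e t : R) := clamp01 ((t - a + e) / e).
Definition tent (a e t : R) := clamp01 (3 - `|t - a| / e).

Lemma continuous_ramp a e : continuous (ramp a e).
Proof.
move=> t; apply: (@continuous_comp _ _ _ (fun t => (t - a + e) / e) clamp01).
  by apply: cvgM; [apply: cvgD; [apply: cvgB|]|]; exact: cvg_cst || exact: cvg_id.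
exact: continuous_clamp01.
Qed.

Lemma continuous_tent a e : continuous (tent a e).
Proof.
move=> t; apply: (@continuous_comp _ _ _ (fun t => 3 - `|t - a| / e) clamp01).
  apply: cvgB; first exact: cvg_cst.
  by apply: cvgM; [apply: cvg_norm; apply: cvgB|]; exact: cvg_cst || exact: cvg_id.
exact: continuous_clamp01.
Qed.

Lemma ramp_ge0 a e t : 0 <= ramp a e t. Proof. exact: clamp01_ge0. Qed.
Lemma ramp_le1 a e t : ramp a e t <= 1. Proof. exact: clamp01_le1. Qed.
Lemma tent_ge0 a e t : 0 <= tent a e t. Proof. exact: clamp01_ge0. Qed.
Lemma tent_le1 a e t : tent a e t <= 1. Proof. exact: clamp01_le1. Qed.

Context {a e : R}.
Hypothesis e_gt0 : 0 < e.

Lemma ramp_eq1 t : a <= t -> ramp a e t = 1.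
Proof. by move=> at_le; apply: clamp01_eq1; rewrite ler_pdivlMr //; lra. Qed.

Lemma ramp_eq0 t : t <= a - e -> ramp a e t = 0.
Proof. by move=> t_le; apply: clamp01_eq0; rewrite pmulr_lle0 ?invr_gt0 //; lra. Qed.

Lemma tent_eq1 t : `|t - a| <= 2 * e -> tent a e t = 1.
Proof.
move=> t_near; apply: clamp01_eq1.
suff : `|t - a| / e <= 2 by lra.
by rewrite ler_pdivrMr //; lra.
Qed.

Lemma tent_eq0 t : 3 * e <= `|t - a| -> tent a e t = 0.
Proof. by move=> t_far; apply: clamp01_eq0; rewrite subr_le0 ler_pdivlMr //; lra. Qed.

Lemma dist_indicator_ramp {b r t : R} : `|b - a| <= e -> `|r - t| <= e ->
  `|(b <= r)%R%:R - ramp a e t| <= tent a e t.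
Proof.
rewrite !ler_norml => /andP[b_lo b_hi] /andP[r_lo r_hi].
have [t_near|] := lerP `|t - a| (2 * e).
  rewrite tent_eq1 //.
  have := ramp_ge0 a e t; have := ramp_le1 a e t.
  by case: (b <= r) => /=; lra.
have tent_nneg := tent_ge0 a e t.
rewrite ltr_normr => /orP[t_above|t_below].
  have -> : b <= r by lra.
  by rewrite ramp_eq1 ?subrr; lra.
have -> : (b <= r) = false by apply/negbTE; rewrite -ltNge; lra.
by rewrite ramp_eq0 ?subrr; lra.
Qed.

End cutoffs.

Section bounded_integrals.
Context {d : measure_display} {T : measurableType d} {R : realType}.
Variable mu : probability T R.

Lemma bounded_integrable {f : T -> R} {M : R} :
  measurable_fun setT f -> (forall x, `|f x| <= M) ->
  mu.-integrable setT (EFin \o f).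
Proof.
move=> mf fM; apply: measurable_bounded_integrable => //.
  exact: le_lt_trans (probability_le1 mu measurableT) (ltry _).
exists M; split; first exact: num_real.
by move=> x Mx y _; exact: le_trans (fM y) (ltW Mx).
Qed.

Lemma Rintegral_dist_le {f g h : T -> R} :
  mu.-integrable setT (EFin \o f) -> mu.-integrable setT (EFin \o g) ->
  mu.-integrable setT (EFin \o h) -> (forall x, `|f x - g x| <= h x) ->
  `|Rintegral mu setT f - Rintegral mu setT g| <= Rintegral mu setT h.
Proof.
move=> f_int g_int h_int fgh.
have fg_int : mu.-integrable setT (EFin \o (fun x => f x - g x)).
  rewrite (_ : _ \o _ = ((EFin \o f) \- (EFin \o g))%E); last first.
    by apply/funext => x /=; rewrite EFinB.
  exact: integrableB.
rewrite -RintegralB //; apply: le_trans (le_normr_Rintegral measurableT fg_int) _.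
by apply: le_Rintegral => //; exact: integrable_norm.
Qed.

Lemma Rintegral_le_measure {S : set T} {f : T -> R} :
  measurable S -> measurable_fun setT f -> (forall x, 0 <= f x <= \1_S x) ->
  ((Rintegral mu setT f)%:E <= mu S)%E.
Proof.
move=> mS mf f_01.
have f_le1 x : `|f x| <= 1.
  have /andP[f_ge0 f_le] := f_01 x; rewrite ger0_norm //.
  by apply: le_trans f_le _; rewrite indicE; case: (_ \in _).
rewrite /Rintegral fineK; last first.
  by apply: integrable_fin_num => //; exact: bounded_integrable mf f_le1.
rewrite -(setIT S) -integral_indic //; apply: ge0_le_integral => //.
- by move=> x _; rewrite lee_fin; case/andP: (f_01 x).
- exact/measurable_realfun.measurable_EFinP.
- exact/measurable_realfun.measurable_EFinP/measurable_realfun.measurable_indic.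
- by move=> x _; rewrite lee_fin; case/andP: (f_01 x).
Qed.

End bounded_integrals.

Section empirical_integral.
Context {d : measure_display} {Omega : measurableType d} {R : realType}.
Context {p : nat}.
Variables (W : nat -> nat -> Omega -> R) (Y : nat -> Omega -> Rp R p).

Lemma emp_intZ n w c (f : 'rV[R]_p -> R) :
  emp_int W Y n w (fun y => c * f y) = c * emp_int W Y n w f.
Proof. by rewrite /emp_int mulr_sumr; apply: eq_bigr => i _; rewrite mulrCA. Qed.

Lemma emp_int_dist_le n w (f g h : 'rV[R]_p -> R) :
  (forall i, 0 <= W n i w) -> (forall y, `|f y - g y| <= h y) ->
  `|emp_int W Y n w f - emp_int W Y n w g| <= emp_int W Y n w h.
Proof.
move=> W_ge0 fgh; rewrite /emp_int -sumrB.
apply: le_trans (ler_norm_sum _ _ _) _; apply: ler_sum => i _.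
by rewrite -mulrBr normrM ger0_norm // ler_wpM2l.
Qed.

Lemma measurable_emp_int n (f : 'rV[R]_p -> R) :
  (forall i, measurable_fun setT (Y i)) ->
  (forall i, measurable_fun setT (W n i)) ->
  measurable_fun (setT : set (Rp R p)) f ->
  measurable_fun setT (fun w => emp_int W Y n w f).
Proof.
move=> mY mW mf; apply: measurable_sum => i.
apply: measurable_realfun.measurable_funM; first exact: mW.
exact: measurableT_comp mf (mY i).
Qed.

Definition emp_weak_cvg (mu : probability (Rp R p) R) (w : Omega) :=
  forall f : 'rV[R]_p -> R, continuous f -> (exists M : R, forall y, `|f y| <= M) ->
    (fun n => (emp_int W Y n w f)%:E) @ \oo --> (\int[mu]_y (f y)%:E)%E.

Lemma emp_int_cvg mu w (f : 'rV[R]_p -> R) (M : R) :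
  emp_weak_cvg mu w -> continuous f -> (forall y, `|f y| <= M) ->
  emp_int W Y n w f @[n --> \oo] --> Rintegral mu setT f.
Proof.
move=> w_cvg f_cont fM.
have f_int := bounded_integrable mu (continuous_open_measurable f_cont) fM.
have := w_cvg f f_cont (ex_intro _ M fM).
rewrite /Rintegral -(fineK (integrable_fin_num _ f_int)) //.
exact: fine_cvg.
Qed.

End empirical_integral.

Section level_set_approximation.
Context {R : realType} {p : nat}.
Variables (mu : probability (Rp R p) R) (rho : 'rV[R]_p -> R) (alpha eps K : R).
Hypotheses (rho_cont : continuous rho) (eps_gt0 : 0 < eps) (K_ge0 : 0 <= K).
Hypothesis norm_le_K : forall y, alpha - 3 * eps < rho y -> `|y| <= K.

Let dist_self_le (t : R) : `|t - t| <= eps.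
Proof. by rewrite subrr normr0 ltW. Qed.

Definition tent_rho (y : 'rV[R]_p) := tent alpha eps (rho y).
Definition ramp_coord j (y : 'rV[R]_p) := y 0 j * ramp alpha eps (rho y).

Lemma continuous_tent_rho : continuous tent_rho.
Proof. by move=> y; apply: continuous_comp (rho_cont y) (continuous_tent _ _ _). Qed.

Lemma continuous_ramp_coord j : continuous (ramp_coord j).
Proof.
move=> y; apply: (@continuousM _ _ (fun z : 'rV[R]_p => z 0 j)).
  exact: coord_continuous.
exact: continuous_comp (rho_cont y) (continuous_ramp _ _ _).
Qed.

Lemma normr_tent_rho_le1 y : `|tent_rho y| <= 1.
Proof. by rewrite ger0_norm ?tent_ge0 ?tent_le1. Qed.

Lemma normr_ramp_coord_le j y : `|ramp_coord j y| <= K.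
Proof.
rewrite /ramp_coord normrM.
have [far|near] := lerP (rho y) (alpha - 3 * eps).
  by rewrite (ramp_eq0 eps_gt0) ?normr0 ?mulr0 //; have := eps_gt0; lra.
rewrite -[K]mulr1 (ger0_norm (ramp_ge0 _ _ _)).
apply: ler_pM; rewrite ?ramp_ge0 ?ramp_le1 //.
exact: le_trans (normr_coord_le _ _ _) (norm_le_K _ near).
Qed.

Lemma dist_coord_indicator_ramp (a : R) (r : 'rV[R]_p -> R) j y :
  `|a - alpha| <= eps -> `|r y - rho y| <= eps ->
  `|y 0 j * \1_[set z | a <= r z] y - ramp_coord j y| <= K * tent_rho y.
Proof.
move=> a_near r_near; rewrite /ramp_coord -mulrBr normrM indicE.
have := dist_indicator_ramp eps_gt0 a_near r_near.
rewrite (_ : (y \in _) = (a <= r y)); last by apply/idP/idP => [/set_mem|/mem_set].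
have [far|near] := lerP (rho y) (alpha - 3 * eps).
  have tent_far : tent alpha eps (rho y) = 0.
    apply: (tent_eq0 eps_gt0); rewrite -normrN; apply: le_trans (ler_norm _).
    by have := eps_gt0; lra.
  by rewrite /tent_rho tent_far mulr0 normr_le0 => /eqP->; rewrite normr0 mulr0.
move=> ind_ramp; apply: ler_pM => //.
exact: le_trans (normr_coord_le _ _ _) (norm_le_K _ near).
Qed.

Lemma normr_level_coord_le j (y : 'rV[R]_p) :
  `|y 0 j * \1_[set z | alpha <= rho z] y| <= K + K.
Proof.
have f_near :=
  dist_coord_indicator_ramp alpha rho j y (dist_self_le _) (dist_self_le _).
rewrite -(subrK (ramp_coord j y) (_ * _)); apply: le_trans (ler_normD _ _) _.
apply: lerD (le_trans f_near _) (normr_ramp_coord_le j y).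
by rewrite -[leRHS]mulr1 ler_wpM2l // (le_trans (ler_norm _) (normr_tent_rho_le1 y)).
Qed.

Lemma integrable_tent_rho : mu.-integrable (setT : set (Rp R p)) (EFin \o tent_rho).
Proof.
refine (bounded_integrable mu _ normr_tent_rho_le1).
exact: continuous_open_measurable continuous_tent_rho.
Qed.

Lemma integrable_ramp_coord j :
  mu.-integrable (setT : set (Rp R p)) (EFin \o ramp_coord j).
Proof.
refine (bounded_integrable mu _ (normr_ramp_coord_le j)).
exact: continuous_open_measurable (continuous_ramp_coord j).
Qed.

Lemma integrable_level_coord j :
  mu.-integrable setT
    (EFin \o (fun y : Rp R p => y 0 j * \1_[set z | alpha <= rho z] y)).
Proof.
refine (bounded_integrable mu _ (normr_level_coord_le j)).
apply: measurable_realfun.measurable_funM.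
  by refine (continuous_open_measurable _); exact: coord_continuous.
apply: measurable_realfun.measurable_indic.
exact: measurable_set_ge (continuous_open_measurable rho_cont).
Qed.

Lemma Rintegral_tent_rho_le (r : R) : 3 * eps <= r ->
  ((Rintegral mu setT tent_rho)%:E <=
     mu [set y : Rp R p | (`|rho y - alpha| <= r)%R])%E.
Proof.
move=> eps_r; apply: Rintegral_le_measure.
- apply: measurable_set_le.
  apply: measurableT_comp (@measurable_realfun.normr_measurable R setT) _.
  apply: measurable_realfun.measurable_funB (measurable_cst _).
  exact: continuous_open_measurable rho_cont.
- exact: continuous_open_measurable continuous_tent_rho.
move=> y; rewrite tent_ge0 indicE /=.
have [/set_mem _|y_far] := boolP (y \in _); first exact: tent_le1.
rewrite /tent_rho (tent_eq0 eps_gt0) //; apply: le_trans eps_r _.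
by rewrite ltW // ltNge; apply: contraNN y_far => y_near; exact: mem_set.
Qed.

Context {d : measure_display} {Omega : measurableType d}.
Variables (W : nat -> nat -> Omega -> R) (Y : nat -> Omega -> Rp R p).

Definition ramp_dev n w :=
  K * `|emp_int W Y n w tent_rho - Rintegral mu setT tent_rho| +
  \sum_(j < p) `|emp_int W Y n w (ramp_coord j) - Rintegral mu setT (ramp_coord j)|.

Lemma measurable_ramp_dev n :
  (forall i, measurable_fun setT (Y i)) -> (forall i, measurable_fun setT (W n i)) ->
  measurable_fun setT (ramp_dev n).
Proof.
move=> mY mW.
have mdist f : continuous f ->
    measurable_fun setT (fun w => `|emp_int W Y n w f - Rintegral mu setT f|).
  move=> f_cont.
  apply: measurableT_comp (@measurable_realfun.normr_measurable R setT) _.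
  apply: measurable_realfun.measurable_funB (measurable_cst _).
  exact: measurable_emp_int (continuous_open_measurable f_cont).
apply: measurable_realfun.measurable_funD.
  apply: measurable_realfun.measurable_funM (measurable_cst _) _.
  exact: mdist continuous_tent_rho.
by apply: measurable_sum => j; exact: mdist (continuous_ramp_coord j).
Qed.

Lemma ramp_dev_cvg0 w : emp_weak_cvg W Y mu w -> ramp_dev n w @[n --> \oo] --> 0.
Proof.
move=> w_cvg.
have dist_cvg0 f M : continuous f -> (forall y, `|f y| <= M) ->
    `|emp_int W Y n w f - Rintegral mu setT f| @[n --> \oo] --> 0.
  move=> f_cont fM; rewrite -(@normr0 _ R) -(subrr (Rintegral mu setT f)).
  by apply: cvg_norm; apply: cvgB (cvg_cst _); exact: emp_int_cvg w_cvg f_cont fM.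
rewrite -[0]addr0 -{1}(mulr0 K); apply: cvgD.
  by apply: cvgMr; exact: dist_cvg0 continuous_tent_rho normr_tent_rho_le1.
have := cvg_big (op := +%R) (x0 := 0) (P := xpredT) add_continuous
  (r := index_enum 'I_p) (Fa := fun=> 0) _
  (fun j _ => dist_cvg0 _ _ (continuous_ramp_coord j) (normr_ramp_coord_le j)).
by rewrite big1_eq; exact.
Qed.

Lemma level_mean_dev_le n w (a : R) (r : 'rV[R]_p -> R) :
  (forall i, 0 <= W n i w) -> `|a - alpha| <= eps ->
  (forall y, `|r y - rho y| <= eps) ->
  `|\row_(j < p) emp_int W Y n w (fun y => y 0 j * \1_[set z | a <= r z] y) -
    \row_(j < p) Rintegral mu setT
      (fun y : Rp R p => y 0 j * \1_[set z | alpha <= rho z] y)|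
  <= 2 * K * Rintegral mu setT tent_rho + ramp_dev n w.
Proof.
move=> W_ge0 a_near r_near.
set eT := emp_int W Y n w tent_rho; set LT := Rintegral mu setT tent_rho.
have LT_ge0 : 0 <= LT by apply: Rintegral_ge0 => y _; exact: tent_ge0.
have dev_ge0 : 0 <= ramp_dev n w.
  by rewrite addr_ge0 ?mulr_ge0 ?sumr_ge0.
apply: normr_mx_le => [|i j]; first by rewrite addr_ge0 // !mulr_ge0.
rewrite !mxE.
set eg := emp_int W Y n w (ramp_coord j); set Lg := Rintegral mu setT (ramp_coord j).
have sample_err :
    `|emp_int W Y n w (fun y => y 0 j * \1_[set z | a <= r z] y) - eg| <= K * eT.
  rewrite -emp_intZ; apply: emp_int_dist_le => // y.
  exact: dist_coord_indicator_ramp.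
have limit_err :
    `|Lg - Rintegral mu setT (fun y : Rp R p => y 0 j * \1_[set z | alpha <= rho z] y)|
    <= K * LT.
  rewrite distrC -RintegralZl //; last exact: integrable_tent_rho.
  apply: Rintegral_dist_le (integrable_level_coord j) (integrable_ramp_coord j) _ _.
    refine (bounded_integrable mu _ (M := K) _).
      apply: measurable_realfun.measurable_funM (measurable_cst _) _.
      exact: continuous_open_measurable continuous_tent_rho.
    move=> y; rewrite normrM ger0_norm // -[leRHS]mulr1 ler_wpM2l //.
    exact: normr_tent_rho_le1.
  move=> y.
  exact: dist_coord_indicator_ramp alpha rho j y (dist_self_le _) (dist_self_le _).
have ramp_err : `|eg - Lg| <=
    \sum_(k < p) `|emp_int W Y n w (ramp_coord k) - Rintegral mu setT (ramp_coord k)|.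
  by rewrite (bigD1 j) //= lerDl sumr_ge0.
have tent_err : K * eT <= K * LT + K * `|eT - LT|.
  by rewrite -mulrDr ler_wpM2l // -lerBlDl ler_norm.
apply: le_trans (ler_distD eg _ _) _.
apply: le_trans (lerD (lexx _) (ler_distD Lg _ _)) _.
rewrite /ramp_dev -/eT -/LT; lra.
Qed.

End level_set_approximation.

Lemma Rintegral_tent_rho_small {R : realType} {p : nat}
    (mu : probability (Rp R p) R) (alpha : R) {rho : 'rV[R]_p -> R} {c eta : R} :
  continuous rho -> (forall a, mu [set y : Rp R p | rho y = a] = 0%E) ->
  0 < c -> 0 < eta ->
  exists eps, [/\ 0 < eps, eps <= c &
    Rintegral mu setT (tent_rho rho alpha eps) <= eta].
Proof.
move=> rho_cont level_null c_gt0 eta_gt0.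
have [r [r_gt0 shell_small]] :=
  level_shell_small mu (continuous_open_measurable rho_cont) level_null alpha _ eta_gt0.
pose eps := Num.min c (r / 3).
have eps_gt0 : 0 < eps by rewrite lt_min c_gt0 divr_gt0.
exists eps; split => //; first by rewrite ge_min lexx.
rewrite -lee_fin; apply: le_trans shell_small.
apply: Rintegral_tent_rho_le => //.
have : eps <= r / 3 by rewrite ge_min lexx orbT.
lra.
Qed.

Theorem lemma7
  (R : realType) (p : nat)
  (d : measure_display) (Omega : measurableType d) (P : probability Omega R)
  (* observations Y_i and weights W_{i,n}(x) (as random variables) *)
  (Y : nat -> Omega -> Rp R p)
  (W : nat -> nat -> Omega -> R)
  (* conditional distribution mu(. | x) of Y given X = x *)
  (mu : probability (Rp R p) R)
  (* conditional depth rho(. | x) and its sample version rho_n(. | x) *)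
  (rho : 'rV[R]_p -> R)
  (rhon : nat -> Omega -> 'rV[R]_p -> R)
  (alphan : nat -> Omega -> R) (alpha : R) :
  (forall i, measurable_fun setT (Y i)) ->
  (forall n i, measurable_fun setT (W n i)) ->
  (forall n i w, 0 <= W n i w) ->
  (forall n w, (0 < n)%N -> \sum_(i < n) W n i w = 1) ->
  (* rho is uniformly bounded *)
  (exists M : R, forall y, `|rho y| <= M) ->
  (* alpha_n are random variables converging in probability to alpha > 0 *)
  (forall n, measurable_fun setT (alphan n)) ->
  0 < alpha ->
  cvg_in_prob P alphan (fun _ => alpha) ->
  (* C(iii) *)
  (forall a : R, mu [set y : Rp R p | rho y = a] = 0%E) ->
  (* C(v) *)
  continuous rho ->
  (forall e : R, 0 < e -> exists M : R, forall y : 'rV[R]_p,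
      M < `|y| -> `|rho y| < e) ->
  (* (W): mu_n(. | x) -> mu(. | x) weakly, almost surely *)
  {ae P, forall w, forall f : 'rV[R]_p -> R, continuous f ->
      (exists M : R, forall y, `|f y| <= M) ->
      (fun n => (emp_int W Y n w f)%:E) @ \oo --> (\int[mu]_y (f y)%:E)%E} ->
  (* (U): sup_y |rho_n(y|x) - rho(y|x)| -P-> 0 *)
  (forall e : R, 0 < e ->
     outer_prob_to0 P
       (fun n => [set w | exists y : 'rV[R]_p, e < `|rhon n w y - rho y|])) ->
  (* conclusion *)
  cvg_in_prob P
    (fun n w => \row_(j < p)
        emp_int W Y n w
          (fun y => y 0 j * \1_[set z | alphan n w <= rhon n w z] y))
    (fun _ => \row_(j < p)
        Rintegral mu setT
          (fun y : Rp R p => y 0 j * \1_[set z | alpha <= rho z] y)).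
Proof.
move=> mY mW W_ge0 _ _ _ alpha_gt0 alphan_cvg level_null rho_cont rho_vanish
  weak_cvg unif_cvg e e_gt0.
have alpha4_gt0 : 0 < alpha / 4 by rewrite divr_gt0.
have [K [K_ge0 superlevel_norm_le]] := superlevel_bounded rho_vanish _ alpha4_gt0.
pose eta := e / (4 * (K + 1)).
have eta_gt0 : 0 < eta by rewrite divr_gt0 // mulr_gt0 // ltr_wpDl.
have [eps [eps_gt0 eps_alpha tent_small]] :=
  Rintegral_tent_rho_small mu alpha rho_cont level_null alpha4_gt0 eta_gt0.
have tent_err : 2 * K * Rintegral mu setT (tent_rho rho alpha eps) <= e / 2.
  have K_eta : K * eta + eta = e / 4.
    by rewrite /eta; field; rewrite lt0r_neq0 // ltr_wpDl.
  have : 2 * K * Rintegral mu setT (tent_rho rho alpha eps) <= 2 * K * eta.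
    by rewrite ler_wpM2l // mulr_ge0.
  lra.
have norm_le_K y : alpha - 3 * eps < rho y -> `|y| <= K.
  by move=> near; apply: superlevel_norm_le; lra.
pose D := ramp_dev mu rho alpha eps K W Y.
have D_cvg : cvg_in_prob P D (fun=> 0).
  apply: ae_cvg_in_prob => [n||]; first exact: measurable_ramp_dev.
    exact: measurable_cst.
  by apply: filterS weak_cvg => w; exact: ramp_dev_cvg0.
have e2_gt0 : 0 < e / 2 by rewrite divr_gt0.
apply: (outer_prob_to0_sub P _ (outer_prob_to0U P (outer_prob_to0U P
  (unif_cvg _ eps_gt0) (alphan_cvg _ eps_gt0)) (D_cvg _ e2_gt0))).
move=> n w /= err.
have [[y y_far]|unif_near] := pselect (exists y, eps < `|rhon n w y - rho y|).
  by left; left; exists y.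
have [alpha_far|alpha_near] := ltrP eps `|alphan n w - alpha|; first by left; right.
have [|D_small] := ltrP (e / 2) `|D n w - 0|; first by right.
exfalso; move: err; apply/negP; rewrite -leNgt.
apply: le_trans (level_mean_dev_le mu rho alpha eps K rho_cont eps_gt0 K_ge0
  norm_le_K W Y n w _ _ (fun i => W_ge0 n i w) alpha_near _) _.
  by move=> y; rewrite leNgt; apply/negP => y_far; apply: unif_near; exists y.
rewrite subr0 in D_small.
have := le_trans (ler_norm _) D_small; rewrite /D; lra.
Qed.
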